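(* Let $n$ be a fixed positive integer and, for $k\ge0$, let \[ C_k=\sum_{j=0}^{n-1}\frac{n^j}{j!}+\frac{n^{n-1}}{(n-1)!}\left(1+n+\cfrac{a_1}{b_1+\cfrac{a_2}{\ddots+\cfrac{a_k}{b_k}}}\right),\qquad a_m=-n(m+n-1),\ b_m=m+2n+1, \] (with the continued fraction term equal to $0$ when $k=0$). Then, as $k\to\infty$, \[ \left|e^n-C_k\right|=O\left(\frac{n^{k+1}}{(k+1)(k+2)\,(n)_{k+2}}\right). \]
   Context: $(a)_0=1$ and $(a)_m=a(a+1)\cdots(a+m-1)$ denotes the Pochhammer symbol. *)

From Stdlib Require Import Reals Factorial.
Open Scope R_scope.

Fixpoint poch (a : R) (m : nat) : R :=
  match m with
  | O => 1
  | S m' => poch a m' * (a + INR m')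
  end.

Fixpoint cfrac (a b : nat -> R) (m len : nat) : R :=
  match len with
  | O => 0
  | S l => a m / (b m + cfrac a b (S m) l)
  end.

Definition a_coef (n : nat) (m : nat) : R := - INR n * INR (m + n - 1).
Definition b_coef (n : nat) (m : nat) : R := INR (m + 2 * n + 1).

Definition Capprox (n k : nat) : R :=
  sum_f_R0 (fun j => INR n ^ j / INR (fact j)) (n - 1)
  + INR n ^ (n - 1) / INR (fact (n - 1))
    * (1 + INR n + cfrac (a_coef n) (b_coef n) 1 k).

(* The continued fraction is the k-th convergent of the hypergeometric series
   1F1(1; n+1; n) = sum_i n^i / (n+1)_i, whose numerators and denominators
   solve the three-term recurrence in closed form.  This turns C_k into the
   partial sum of e^n up to the index n+k, corrected by n/(k+1) times its last
   term.  The differences C_k - C_{k+1} are positive and contract by the factor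
   n/(n+1), so |e^n - C_k| is at most n+1 times C_k - C_{k+1}, which is the
   stated bound up to a constant depending on n only. *)

From Stdlib Require Import Reals Factorial Lra Lia Psatz.
From Coquelicot Require Import Coquelicot.
Open Scope R_scope.

Lemma poch_pos (a : R) (m : nat) : 0 < a -> 0 < poch a m.
Proof.
  intro Ha; induction m as [|m IHm]; simpl; [lra|].
  pose proof (pos_INR m); apply Rmult_lt_0_compat; lra.
Qed.

Lemma fact_add_poch (a m : nat) :
  INR (fact (a + m)) = INR (fact a) * poch (INR a + 1) m.
Proof.
  induction m as [|m IHm]; cbn [poch].
  - rewrite Nat.add_0_r; ring.
  - rewrite Nat.add_succ_r, fact_simpl, mult_INR, IHm, S_INR, plus_INR; ring.
Qed.

Definition exp_term (x : R) (j : nat) : R := x ^ j / INR (fact j).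

Lemma exp_term_S (x : R) (j : nat) :
  exp_term x (S j) = exp_term x j * x / INR (S j).
Proof.
  unfold exp_term; rewrite fact_simpl, mult_INR; simpl pow.
  pose proof (INR_fact_neq_0 j); pose proof (not_0_INR (S j) (Nat.neq_succ_0 j)).
  field; auto.
Qed.

Lemma exp_term_add (x : R) (a m : nat) :
  exp_term x (a + m) = exp_term x a * x ^ m / poch (INR a + 1) m.
Proof.
  unfold exp_term; rewrite fact_add_poch, pow_add.
  pose proof (INR_fact_neq_0 a); pose proof (poch_pos (INR a + 1) m).
  pose proof (pos_INR a); field; split; lra.
Qed.

Lemma exp_term_ge0 (x : R) (j : nat) : 0 <= x -> 0 <= exp_term x j.
Proof.
  intro Hx; unfold exp_term.
  apply Rdiv_le_0_compat; [apply pow_le, Hx | apply INR_fact_lt_0].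
Qed.

Fixpoint cfrac_tail (a b : nat -> R) (m len : nat) (y : R) : R :=
  match len with
  | O => y
  | S l => a m / (b m + cfrac_tail a b (S m) l y)
  end.

Lemma cfrac_tail0 (a b : nat -> R) (len m : nat) :
  cfrac a b m len = cfrac_tail a b m len 0.
Proof. revert m; induction len as [|len IH]; intro m; simpl; rewrite ?IH; reflexivity. Qed.

Lemma cfrac_tailS (a b : nat -> R) (len m : nat) (y : R) :
  cfrac_tail a b m (S len) y
  = cfrac_tail a b m len (a (m + len)%nat / (b (m + len)%nat + y)).
Proof.
  revert m; induction len as [|len IH]; intro m.
  - simpl; rewrite Nat.add_0_r; reflexivity.
  - change (cfrac_tail a b m (S (S len)) y)
      with (a m / (b m + cfrac_tail a b (S m) (S len) y)).
    rewrite IH; simpl; rewrite Nat.add_succ_r; reflexivity.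
Qed.

Section Convergents.

Variables (a b A B : nat -> R) (tail : R -> Prop).

Hypothesis A0 : A 0%nat = 0.
Hypothesis B0 : B 0%nat = 1.
Hypothesis A1 : A 1%nat = a 1%nat.
Hypothesis B1 : B 1%nat = b 1%nat.
Hypothesis A_rec :
  forall k, A (S (S k)) = b (S (S k)) * A (S k) + a (S (S k)) * A k.
Hypothesis B_rec :
  forall k, B (S (S k)) = b (S (S k)) * B (S k) + a (S (S k)) * B k.

(* [tail] is a set of admissible tails: closed under adding one more level
   to the fraction, and keeping every denominator away from zero. *)
Hypothesis tail_step :
  forall k y, tail y -> tail (a (S (S k)) / (b (S (S k)) + y)).
Hypothesis tail_b : forall k y, tail y -> b (S (S k)) + y <> 0.
Hypothesis tail_B : forall k y, tail y -> B (S k) + y * B k <> 0.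

Lemma cfrac_tail_convergent (k : nat) (y : R) : tail y ->
  cfrac_tail a b 1 (S k) y = (A (S k) + y * A k) / (B (S k) + y * B k).
Proof.
  revert y; induction k as [|k IHk]; intros y Hy.
  - pose proof (tail_B 0 y Hy) as Hd; rewrite B1, B0 in Hd.
    simpl; rewrite A1, B1, A0, B0; field; rewrite Rmult_1_r in Hd; exact Hd.
  - set (y' := a (S (S k)) / (b (S (S k)) + y)).
    rewrite cfrac_tailS; simpl (1 + S k)%nat; fold y'.
    rewrite (IHk y' (tail_step k y Hy)), A_rec.
    pose proof (tail_b k y Hy) as Hb; pose proof (tail_B k y' (tail_step k y Hy)) as HB.
    fold y' in HB.
    assert (Ha : a (S (S k)) = y' * (b (S (S k)) + y)) by (unfold y'; field; exact Hb).
    assert (Hden : B (S (S k)) + y * B (S k)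
                   = (b (S (S k)) + y) * (B (S k) + y' * B k)) by (rewrite B_rec, Ha; ring).
    rewrite Hden, Ha; field; split; assumption.
Qed.

Lemma cfrac_convergent (k : nat) : tail 0 -> cfrac a b 1 k = A k / B k.
Proof.
  intro H0; rewrite cfrac_tail0; destruct k as [|k].
  - simpl; rewrite A0, B0; field.
  - rewrite cfrac_tail_convergent by exact H0; f_equal; ring.
Qed.

End Convergents.

Lemma is_lim_seq_ratio_error (u : nat -> R) (L q : R) :
  0 <= q < 1 -> is_lim_seq u L ->
  (forall j, Rabs (u (S j) - u (S (S j))) <= q * Rabs (u j - u (S j))) ->
  forall k, Rabs (L - u k) <= Rabs (u k - u (S k)) / (1 - q).
Proof.
  intros Hq Hu Hratio k.
  set (e j := Rabs (u j - u (S j)) / (1 - q)).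
  assert (He : forall j, 0 <= e j).
  { intro j; apply Rdiv_le_0_compat; [apply Rabs_pos | lra]. }
  assert (Hstep : forall j, Rabs (u j - u (S j)) <= e j - e (S j)).
  { intro j; pose proof (Hratio j).
    apply (Rmult_le_reg_r (1 - q)); [lra|].
    unfold e; field_simplify; lra. }
  assert (Htele : forall m, Rabs (u k - u (k + m)%nat) <= e k - e (k + m)%nat).
  { induction m as [|m IHm].
    - rewrite Nat.add_0_r, Rminus_diag, Rabs_R0; lra.
    - rewrite Nat.add_succ_r.
      set (j := (k + m)%nat) in *.
      replace (u k - u (S j)) with ((u k - u j) + (u j - u (S j))) by ring.
      pose proof (Rabs_triang (u k - u j) (u j - u (S j))).
      pose proof (Hstep j); lra. }
  assert (Hlim : is_lim_seq (fun m => Rabs (u k - u (k + m)%nat)) (Rabs (u k - L))).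
  { apply (is_lim_seq_abs (fun m => u k - u (k + m)%nat) (u k - L)).
    apply is_lim_seq_minus'; [apply is_lim_seq_const|].
    apply (is_lim_seq_incr_n u k L) in Hu.
    apply (is_lim_seq_ext _ _ _ (fun m => f_equal u (Nat.add_comm m k)) Hu). }
  rewrite Rabs_minus_sym.
  refine (is_lim_seq_le _ _ _ _ _ Hlim (is_lim_seq_const (e k))).
  intro m; pose proof (He (k + m)%nat); pose proof (Htele m); lra.
Qed.

Lemma a_coef_S (n m : nat) : a_coef n (S m) = - INR n * (INR m + INR n).
Proof.
  unfold a_coef; replace (S m + n - 1)%nat with (m + n)%nat by lia.
  rewrite plus_INR; ring.
Qed.

Lemma b_coef_eq (n m : nat) : b_coef n m = INR m + 2 * INR n + 1.
Proof. unfold b_coef; rewrite !plus_INR, mult_INR; simpl; ring. Qed.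

Definition hyp_sum (n k : nat) : R :=
  sum_f_R0 (fun i => INR n ^ i / poch (INR n + 1) i) k.

Definition cf_den (n k : nat) : R := INR (S k) * poch (INR n + 1) k.

Definition cf_num (n k : nat) : R :=
  cf_den n k * (hyp_sum n k - 1 - INR n) + INR n ^ S k.

Lemma cf_den_pos (n k : nat) : 0 < cf_den n k.
Proof.
  apply Rmult_lt_0_compat; [apply lt_0_INR; lia|].
  apply poch_pos; pose proof (pos_INR n); lra.
Qed.

Lemma cf_den_gap (n k : nat) : INR n * cf_den n k < cf_den n (S k).
Proof.
  unfold cf_den; cbn [poch]; rewrite !S_INR.
  pose proof (pos_INR n); pose proof (pos_INR k).
  assert (0 < poch (INR n + 1) k) by (apply poch_pos; lra).
  nra.
Qed.

Lemma cf_den_rec (n k : nat) :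
  cf_den n (S (S k))
  = b_coef n (S (S k)) * cf_den n (S k) + a_coef n (S (S k)) * cf_den n k.
Proof. unfold cf_den; rewrite a_coef_S, b_coef_eq; cbn [poch]; rewrite !S_INR; ring. Qed.

Lemma cf_num_rec (n k : nat) :
  cf_num n (S (S k))
  = b_coef n (S (S k)) * cf_num n (S k) + a_coef n (S (S k)) * cf_num n k.
Proof.
  unfold cf_num, cf_den, hyp_sum; rewrite a_coef_S, b_coef_eq.
  cbn [sum_f_R0 poch pow]; rewrite !S_INR.
  pose proof (pos_INR n); pose proof (pos_INR k).
  assert (0 < poch (INR n + 1) k) by (apply poch_pos; lra).
  field; repeat split; lra.
Qed.

Lemma cfrac_closed_form (n k : nat) :
  1 + INR n + cfrac (a_coef n) (b_coef n) 1 k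
  = hyp_sum n k + INR n ^ S k / cf_den n k.
Proof.
  pose proof (pos_INR n) as Hn.
  rewrite (cfrac_convergent _ _ (cf_num n) (cf_den n) (fun y => - INR n <= y <= 0)).
  - unfold cf_num; pose proof (cf_den_pos n k); field; lra.
  - unfold cf_num, cf_den, hyp_sum; simpl; field.
  - unfold cf_den; simpl; ring.
  - unfold cf_num, cf_den, hyp_sum; rewrite a_coef_S; simpl; field; lra.
  - unfold cf_den; rewrite b_coef_eq; simpl; ring.
  - apply cf_num_rec.
  - apply cf_den_rec.
  - intros j y Hy; rewrite a_coef_S, b_coef_eq.
    set (D := INR (S (S j)) + 2 * INR n + 1 + y).
    assert (HD : INR (S j) + INR n <= D) by (unfold D; rewrite !S_INR; lra).
    assert (HD0 : 0 < D) by (pose proof (lt_0_INR (S j) (Nat.lt_0_succ j)); lra).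
    pose proof (Rinv_0_lt_compat D HD0).
    assert (0 <= INR n * (INR (S j) + INR n) * / D)
      by (repeat apply Rmult_le_pos; pose proof (pos_INR (S j)); lra).
    unfold Rdiv; split; [|lra].
    apply (Rmult_le_reg_r D); [exact HD0|].
    rewrite Rmult_assoc, Rinv_l by lra; nra.
  - intros j y Hy; rewrite b_coef_eq, !S_INR; pose proof (pos_INR j); lra.
  - intros j y Hy; pose proof (cf_den_gap n j); pose proof (cf_den_pos n j); nra.
  - lra.
Qed.

Lemma sum_exp_term_split (x : R) (m k : nat) :
  sum_f_R0 (exp_term x) (S m + k)
  = sum_f_R0 (exp_term x) m
    + exp_term x (S m) * sum_f_R0 (fun i => x ^ i / poch (INR (S m) + 1) i) k.
Proof.
  induction k as [|k IHk].
  - rewrite Nat.add_0_r; cbn [sum_f_R0 pow poch]; field.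
  - rewrite Nat.add_succ_r; cbn [sum_f_R0]; rewrite IHk, <- Nat.add_succ_r, exp_term_add.
    pose proof (poch_pos (INR (S m) + 1) (S k) ltac:(pose proof (pos_INR (S m)); lra)).
    field; lra.
Qed.

Definition Csum (n k : nat) : R :=
  sum_f_R0 (exp_term (INR n)) (n + k) + INR n / INR (S k) * exp_term (INR n) (n + k).

Lemma Capprox_Csum (n k : nat) : (0 < n)%nat -> Capprox n k = Csum n k.
Proof.
  intro hn; destruct n as [|m]; [lia|].
  unfold Capprox, Csum; rewrite cfrac_closed_form.
  replace (S m - 1)%nat with m by lia.
  set (x := INR (S m)).
  assert (Hx : 0 < x) by (apply lt_0_INR; lia).
  assert (Hterm : x ^ m / INR (fact m) = exp_term x (S m)).
  { rewrite exp_term_S; fold x; unfold exp_term; pose proof (INR_fact_neq_0 m).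
    field; split; [assumption | apply Rgt_not_eq; exact Hx]. }
  change (sum_f_R0 (fun j => x ^ j / INR (fact j)) m) with (sum_f_R0 (exp_term x) m).
  rewrite Hterm, sum_exp_term_split, exp_term_add.
  unfold hyp_sum, cf_den; fold x.
  pose proof (poch_pos (x + 1) k ltac:(lra)); pose proof (lt_0_INR (S k) (Nat.lt_0_succ k)).
  cbn [pow]; field; lra.
Qed.

Lemma Csum_decrement (n k : nat) :
  Csum n k - Csum n (S k)
  = INR n / (INR (S k) * INR (S (S k))) * exp_term (INR n) (n + S k).
Proof.
  unfold Csum; rewrite !Nat.add_succ_r; cbn [sum_f_R0]; rewrite !exp_term_S.
  rewrite !S_INR, !plus_INR.
  pose proof (pos_INR n); pose proof (pos_INR k).
  field; repeat split; lra.
Qed.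

Lemma Csum_decrement_ge0 (n k : nat) : 0 <= Csum n k - Csum n (S k).
Proof.
  rewrite Csum_decrement; pose proof (pos_INR n).
  apply Rmult_le_pos; [|apply exp_term_ge0; lra].
  apply Rdiv_le_0_compat; [lra|].
  apply Rmult_lt_0_compat; apply lt_0_INR; lia.
Qed.

Lemma Csum_decrement_contracts (n k : nat) :
  Rabs (Csum n (S k) - Csum n (S (S k)))
  <= INR n / (INR n + 1) * Rabs (Csum n k - Csum n (S k)).
Proof.
  rewrite !Rabs_pos_eq by apply Csum_decrement_ge0.
  set (d := Csum n k - Csum n (S k)).
  pose proof (Csum_decrement_ge0 n k) as Hd; fold d in Hd.
  pose proof (pos_INR n); pose proof (pos_INR k).
  assert (Hratio : Csum n (S k) - Csum n (S (S k))
                   = INR n / (INR n + 1) * d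
                     * ((INR n + 1) * (INR k + 1) / ((INR k + 3) * (INR n + INR k + 2)))).
  { unfold d; rewrite !Csum_decrement, (Nat.add_succ_r n (S k)), exp_term_S.
    rewrite !S_INR, !plus_INR, !S_INR; field; repeat split; lra. }
  rewrite Hratio; apply Rle_trans with (INR n / (INR n + 1) * d * 1); [|lra].
  apply Rmult_le_compat_l; [apply Rmult_le_pos; [apply Rdiv_le_0_compat|]; lra|].
  assert (Hden : 0 < (INR k + 3) * (INR n + INR k + 2)) by nra.
  apply (Rdiv_le_1 _ _ Hden); nra.
Qed.

Lemma is_lim_seq_Csum (n : nat) : is_lim_seq (Csum n) (exp (INR n)).
Proof.
  assert (Hsum : is_lim_seq (fun k => sum_f_R0 (exp_term (INR n)) (n + k)) (exp (INR n))).
  { apply is_lim_seq_ext with (fun k => E1 (INR n) (k + n)).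
    - intro k; rewrite Nat.add_comm; apply sum_eq; intros i _.
      unfold exp_term, Rdiv; apply Rmult_comm.
    - apply (is_lim_seq_incr_n (E1 (INR n)) n), is_lim_seq_Reals, E1_cvg. }
  assert (Hterm : is_lim_seq (fun k => exp_term (INR n) (n + k)) 0).
  { apply is_lim_seq_ext with (fun k => INR n ^ (k + n) / INR (fact (k + n))).
    - intro k; rewrite Nat.add_comm; reflexivity.
    - apply (is_lim_seq_incr_n (fun j => INR n ^ j / INR (fact j)) n).
      apply is_lim_seq_Reals, cv_speed_pow_fact. }
  assert (Hrem : is_lim_seq (fun k => INR n / INR (S k) * exp_term (INR n) (n + k)) 0).
  { apply is_lim_seq_le_le with (fun _ => 0) (fun k => INR n * exp_term (INR n) (n + k)).
    - intro k; pose proof (pos_INR n); pose proof (exp_term_ge0 (INR n) (n + k) H).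
      assert (Hk : 1 <= INR (S k)) by (apply (le_INR 1); lia).
      assert (INR n / INR (S k) <= INR n).
      { apply (Rmult_le_reg_r (INR (S k))); [lra|].
        unfold Rdiv; rewrite Rmult_assoc, Rinv_l by lra; nra. }
      split; [apply Rmult_le_pos; [apply Rdiv_le_0_compat|]|apply Rmult_le_compat_r]; lra.
    - apply is_lim_seq_const.
    - replace (Finite 0) with (Rbar_mult (INR n) 0) by (simpl; f_equal; ring).
      apply is_lim_seq_scal_l, Hterm. }
  replace (exp (INR n)) with (exp (INR n) + 0) by ring.
  apply (is_lim_seq_plus' _ _ _ _ Hsum Hrem).
Qed.

Lemma Csum_decrement_poch (n k : nat) : (0 < n)%nat ->
  Csum n k - Csum n (S k)
  = INR n ^ (n + 1) / INR (fact (n - 1))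
    * (INR n ^ (k + 1) / (INR (k + 1) * INR (k + 2) * poch (INR n) (k + 2))).
Proof.
  intro hn; destruct n as [|m]; [lia|].
  rewrite Csum_decrement; replace (S m - 1)%nat with m by lia.
  replace (S m + S k)%nat with (m + (k + 2))%nat by lia.
  rewrite exp_term_add; unfold exp_term.
  replace (INR m + 1) with (INR (S m)) by (rewrite S_INR; ring).
  set (x := INR (S m)).
  assert (Hx : 0 < x) by (apply lt_0_INR; lia).
  pose proof (poch_pos x (k + 2) Hx); pose proof (INR_fact_lt_0 m); pose proof (pos_INR k).
  rewrite !pow_add, !plus_INR, !S_INR; cbn [pow INR].
  field; repeat split; lra.
Qed.

Theorem corollary2p5 (n : nat) (hn : (0 < n)%nat) :
  exists (M : R) (K : nat), forall k : nat, (K <= k)%nat ->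
    Rabs (exp (INR n) - Capprox n k)
      <= M * (INR n ^ (k + 1)
              / (INR (k + 1) * INR (k + 2) * poch (INR n) (k + 2))).
Proof.
  exists ((INR n + 1) * (INR n ^ (n + 1) / INR (fact (n - 1)))), 0%nat.
  intros k _.
  assert (Hq : 0 <= INR n / (INR n + 1) < 1).
  { pose proof (pos_INR n); split; [apply Rdiv_le_0_compat; lra|].
    apply (Rdiv_lt_1 (INR n) (INR n + 1) ltac:(lra)); lra. }
  rewrite Capprox_Csum by exact hn.
  eapply Rle_trans.
  { apply (is_lim_seq_ratio_error _ _ _ Hq (is_lim_seq_Csum n) (Csum_decrement_contracts n)). }
  rewrite Rabs_pos_eq by apply Csum_decrement_ge0.
  replace (1 - INR n / (INR n + 1)) with (/ (INR n + 1))
    by (pose proof (pos_INR n); field; lra).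
  rewrite Csum_decrement_poch by exact hn.
  unfold Rdiv; rewrite Rinv_inv; right; ring.
Qed.
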